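(* Let $G$ be a group with identity $e$, $A$ a finite set with $|A|\ge2$, $S\subseteq G$ finite with $e\in S$, and suppose $(\mathcal P,f)$ generates a local map $\mu:A^S\to A$. (1) If there exist $z,w\in\mathcal P^c$ with $z\neq w$ and $\mathrm{Res}_e(z)=\mathrm{Res}_e(w)$, then $e$ is essential for $\mu$. (2) If $f$ is well-behaved and there exist $p,q\in\mathcal P$ with $p\neq q$ and $\mathrm{Res}_e(p)=\mathrm{Res}_e(q)$, then $e$ is essential for $\mu$.
   Context: $A^S$ is the set of functions $S\to A$. For $s\in S$, $\mathrm{Res}_s(z)=z|_{S\setminus\{s\}}$. An element $s\in S$ is essential for $\mu$ if there exist $z,w\in A^S$ with $\mathrm{Res}_s(z)=\mathrm{Res}_s(w)$ but $\mu(z)\neq\mu(w)$. The pair $(\mathcal P,f)$ generates $\mu$ if $\mathcal P=\{z\in A^S:\mu(z)\neq z(e)\}$ and $f:\mathcal P\to A$ is the restriction of $\mu$ to $\mathcal P$; $\mathcal P^c=A^S\setminus\mathcal P$. The function $f$ is well-behaved if for all $p,q\in\mathcal P$: $p(e)=q(e)$ if and only if $f(p)=f(q)$. *)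

From HB Require Import structures.
From mathcomp Require Import all_boot all_order.
From mathcomp Require Import finmap.
Set Implicit Arguments. Unset Strict Implicit. Unset Printing Implicit Defensive.
Local Open Scope fset_scope.

Definition config (G : choiceType) (S : {fset G}) (A : Type) := S -> A.

(* Res_s(z) = Res_s(w): z and w agree on S \ {s}. *)
Definition res_eq (G : choiceType) (S : {fset G}) (A : Type) (s : G)
  (z w : config S A) : Prop := forall t : S, val t <> s -> z t = w t.

Definition essential (G : choiceType) (S : {fset G}) (A : Type)
  (mu : config S A -> A) (s : G) : Prop :=
  exists z w : config S A, res_eq s z w /\ mu z <> mu w.

Definition generates (G : choiceType) (S : {fset G}) (A : Type) (e : G)
  (he : e \in S) (mu : config S A -> A)
  (P : config S A -> Prop) (f : {z : config S A | P z} -> A) : Prop :=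
  (forall z, P z <-> mu z <> z [` he]) /\
  (forall (z : config S A) (hz : P z), f (exist _ z hz) = mu z).

Definition well_behaved (G : choiceType) (S : {fset G}) (A : Type) (e : G)
  (he : e \in S) (P : config S A -> Prop) (f : {z : config S A | P z} -> A) : Prop :=
  forall p q : {z : config S A | P z},
    proj1_sig p [` he] = proj1_sig q [` he] <-> f p = f q.
Arguments generates {G S A} e he mu P f.
Arguments well_behaved {G S A} e he P f.

(* Two distinct configurations that agree off [e] must differ at [e]. Outside
   [P] the local map reads off the value at [e], so it separates them; inside
   [P] a well-behaved [f] separates configurations with different values at [e]. *)
From HB Require Import structures.
From mathcomp Require Import all_boot all_order.
From mathcomp Require Import finmap.
From Stdlib Require Import FunctionalExtensionality.
Local Open Scope fset_scope.

Lemma res_eq_eq {G : choiceType} {S : {fset G}} {A : Type} {e : G} {he : e \in S}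
  {z w : config S A} : res_eq e z w -> z [` he] = w [` he] -> z = w.
Proof.
move=> zw_off_e zw_at_e; apply: functional_extensionality => t.
have [t_e | t_ne] := eqVneq (val t) e.
  by rewrite (_ : t = [` he]) //; apply: val_inj.
by apply: zw_off_e; apply/eqP.
Qed.

Section GeneratedLocalMap.

Variables (G : choiceType) (S : {fset G}) (A : eqType) (e : G) (he : e \in S).
Variables (mu : config S A -> A) (P : config S A -> Prop).
Variable f : {z : config S A | P z} -> A.
Hypothesis hgen : generates e he mu P f.

Lemma generates_notP {z} : ~ P z -> mu z = z [` he].
Proof.
move=> notPz; have [// | /eqP mu_ne] := eqVneq (mu z) (z [` he]).
by case: notPz; apply/(proj1 hgen).
Qed.

Lemma essential_of_compl :
  (exists z w : config S A, ~ P z /\ ~ P w /\ z <> w /\ res_eq e z w) ->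
  essential mu e.
Proof.
case=> z [w [notPz [notPw [z_ne_w zw_off_e]]]]; exists z, w; split=> //.
rewrite (generates_notP notPz) (generates_notP notPw) => zw_at_e.
exact: z_ne_w (res_eq_eq zw_off_e zw_at_e).
Qed.

Lemma essential_of_well_behaved :
  well_behaved e he P f ->
  (exists p q : config S A, P p /\ P q /\ p <> q /\ res_eq e p q) ->
  essential mu e.
Proof.
move=> wb [p [q [Pp [Pq [p_ne_q pq_off_e]]]]]; exists p, q; split=> //.
rewrite -((proj2 hgen) p Pp) -((proj2 hgen) q Pq) => f_pq.
exact: p_ne_q (res_eq_eq pq_off_e ((wb (exist _ p Pp) (exist _ q Pq)).2 f_pq)).
Qed.

End GeneratedLocalMap.

Theorem mainTheorem4
  (G : choiceType) (mul : G -> G -> G) (inv : G -> G) (e : G)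
  (mulA : forall x y z, mul x (mul y z) = mul (mul x y) z)
  (mul1g : forall x, mul e x = x) (mulg1 : forall x, mul x e = x)
  (mulVg : forall x, mul (inv x) x = e) (mulgV : forall x, mul x (inv x) = e)
  (A : finType) (hA : 2 <= #|A|)
  (S : {fset G}) (he : e \in S)
  (mu : config S A -> A)
  (P : config S A -> Prop) (f : {z : config S A | P z} -> A)
  (hgen : generates e he mu P f) :
  ((exists z w : config S A, ~ P z /\ ~ P w /\ z <> w /\ res_eq e z w) ->
      essential mu e) /\
  (well_behaved e he P f ->
   (exists p q : config S A, P p /\ P q /\ p <> q /\ res_eq e p q) ->
      essential mu e).
Proof.
split; [exact: essential_of_compl hgen | exact: essential_of_well_behaved hgen].
Qed.
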